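(* Let $G$ be a finite group, let $N$ be a non-trivial normal subgroup of $G$ which is a $p$-group for a prime $p$, and let $x,y\in G$. If $C_N(x)=1$, then there exists $n\in N$ such that $p$ divides the order of $\langle x,yn\rangle$. *)

From mathcomp Require Import all_boot all_fingroup all_solvable.

(* Suppose [p] divides neither [|<x, y>|] nor [|<x, y n>|] for some [n <> 1] in [N].
   Both groups are then complements of the normal [p]-subgroup [N] in the same
   group [N <x, y>], so by Schur-Zassenhaus they are conjugate by some [c] in [N].
   As both contain [x], the commutator [[x, c]] lies in [N] and in a complement of
   [N], hence is trivial; so [c] centralizes [x] and [c = 1].  The two groups then
   coincide and contain [n = y^-1 (y n)], which is impossible as they meet [N]
   trivially. *)

From mathcomp Require Import all_boot all_fingroup all_solvable.
Set Implicit Arguments.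
Unset Strict Implicit.
Unset Printing Implicit Defensive.
Local Open Scope group_scope.

Section CoprimeComplements.

Variable gT : finGroupType.
Implicit Types (N H K : {group gT}) (x y c n : gT).

Lemma coprime_complements_conj N H K :
    solvable N -> H \subset 'N(N) -> K \subset 'N(N) ->
    coprime #|N| #|H| -> coprime #|N| #|K| -> N * H = N * K ->
  exists2 c, c \in N & K :=: H :^ c.
Proof.
move=> solN nNH nNK coNH coNK eqNHK.
have cardHK : #|K| = #|H|.
  apply/eqP; rewrite -(eqn_pmul2l (cardG_gt0 N)).
  by rewrite -!TI_cardMg ?coprime_TIg // eqNHK.
have sKNH : K \subset N * H by rewrite eqNHK mulG_subr.
exact: SchurZassenhaus_trans_sol solN nNH sKNH coNH cardHK.
Qed.

Lemma TI_memJ_cent1 N K x c :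
    x \in 'N(N) -> c \in N -> N :&: K = 1 -> x \in K -> x ^ c \in K ->
  c \in 'C_N[x].
Proof.
move=> nNx Nc tiNK Kx Kxc.
have xcNK : [~ x, c] \in N :&: K.
  rewrite inE {1}commgEr groupMr // memJ_norm // groupV Nc /=.
  by rewrite commgEl groupM ?groupV.
rewrite tiNK inE in xcNK.
by rewrite inE Nc cent1C; apply/cent1P/commgP.
Qed.

Lemma coprime_complements_eq_cent1 N H K x :
    solvable N -> H \subset 'N(N) -> K \subset 'N(N) ->
    coprime #|N| #|H| -> coprime #|N| #|K| -> N * H = N * K ->
    x \in H -> x \in K -> 'C_N[x] = 1 ->
  H = K.
Proof.
move=> solN nNH nNK coNH coNK eqNHK Hx Kx cNx1.
have [c Nc defK] := coprime_complements_conj solN nNH nNK coNH coNK eqNHK.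
have : c \in 'C_N[x].
  apply: (TI_memJ_cent1 (K := K)); rewrite ?(subsetP nNH) ?coprime_TIg //.
  by rewrite defK memJ_conjg.
by rewrite cNx1 inE => /eqP c1; apply: val_inj; rewrite /= defK c1 conjsg1.
Qed.

Lemma joing_set2_mulr N x y n :
  n \in N -> N <*> [set x; y * n] = N <*> [set x; y].
Proof.
move=> Nn; apply/eqP.
rewrite eqEsubset !gen_subG !subUset !sub1set !joing_subl /=.
apply/and3P; split; first (apply/andP; split);
  try by apply: mem_gen; rewrite !inE eqxx ?orbT.
  by apply: groupM; apply: mem_gen; rewrite !inE ?eqxx ?Nn ?orbT.
rewrite -[y in y \in _](mulgK n y).
by apply: groupM; apply: mem_gen; rewrite !inE ?eqxx ?groupV ?Nn ?orbT.
Qed.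

End CoprimeComplements.

Theorem lemma2p4 (gT : finGroupType) (G N : {group gT}) (p : nat) (x y : gT) :
  prime p -> N <| G -> N :!=: 1 -> p.-group N ->
  x \in G -> y \in G -> 'C_N[x] = 1 ->
  exists2 n, n \in N & (p %| #|<<[set x; (y * n)%g]>>|)%N.
Proof.
move=> pr_p /andP[sNG nNG] ntN pN Gx Gy cNx1.
have [n Nn n_ne1] := trivgPn _ ntN.
pose H (z : gT) := [group of <<[set x; y * z]>>].
have nNH z : z \in N -> H z \subset 'N(N).
  move=> Nz; apply: subset_trans nNG.
  by rewrite gen_subG subUset !sub1set Gx groupM // (subsetP sNG).
have coNH z : ~~ (p %| #|H z|)%N -> coprime #|N| #|H z|.
  by move=> p'H; apply: (pnat_coprime pN); rewrite p'natE.
have xH z : x \in H z by rewrite mem_gen ?set21.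
have mulNH z : z \in N -> N * H z = N * H 1.
  move=> Nz; rewrite -!norm_joinEr ?nNH ?group1 // !joing_idr.
  by rewrite !joing_set2_mulr ?group1.
apply/exists_inP; apply: contraR n_ne1; rewrite negb_exists_in => /forall_inP p'H.
have eqH : H 1 = H n.
  apply: (coprime_complements_eq_cent1 (pgroup_sol pN)) (xH 1) (xH n) cNx1;
    by rewrite ?nNH ?coNH ?p'H ?mulNH ?group1.
have yH1 : y \in H 1 by rewrite /= mulg1 mem_gen ?set22.
have ynH1 : y * n \in H 1 by rewrite eqH mem_gen ?set22.
have : n \in N :&: H 1 by rewrite inE Nn -(mulKg y n) groupM ?groupV.
by rewrite coprime_TIg ?coNH ?p'H // inE.
Qed.
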